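(* For all $\boldsymbol\upsilon,\boldsymbol\xi\in P_{II}$: $\boldsymbol\upsilon\subseteq\boldsymbol\xi$ if and only if $\mathcal D_{\boldsymbol\upsilon\text{-unc}}\subseteq\mathcal D_{\boldsymbol\xi\text{-unc}}$.
   Context: Let $n\ge1$, $L=\{1,\dots,n\}$, and for $i\in L$ let $\mathcal H_i$ be a Hilbert space with $1<\dim\mathcal H_i<\infty$; $\mathcal H_X=\bigotimes_{i\in X}\mathcal H_i$ and $\mathcal D_X$ is the set of density operators on $\mathcal H_X$. $P_I$ is the set of partitions of $L$ ordered by refinement. For $\xi\in P_I$, $\mathcal D_{\xi\text{-unc}}=\{\varrho\in\mathcal D_L:\varrho=\bigotimes_{X\in\xi}\varrho_X,\ \varrho_X\in\mathcal D_X\}$. $P_{II}$ is the set of nonempty down-sets of $(P_I,\preceq)$ (nonempty sets of partitions closed under taking finer partitions), and for $\boldsymbol\xi\in P_{II}$, $\mathcal D_{\boldsymbol\xi\text{-unc}}=\bigcup_{\xi\in\boldsymbol\xi}\mathcal D_{\xi\text{-unc}}$. *)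

From HB Require Import structures.
From mathcomp Require Import all_boot all_order all_algebra.
Set Implicit Arguments. Unset Strict Implicit. Unset Printing Implicit Defensive.
Import Order.TTheory GRing.Theory Num.Theory.
Local Open Scope ring_scope.

(* Subsystems are the elements of L = 'I_n; subsystem i has local dimension d i.
   A computational basis of H_X (X a subset of L) is indexed by cfg d X:
   dependent functions assigning to each i in X a basis index in 'I_(d i). *)
Definition cfg (n : nat) (d : 'I_n -> nat) (X : {set 'I_n}) : finType :=
  {dffun forall i : {i : 'I_n | i \in X}, 'I_(d (val i))}.

(* linear operators on H_X, as matrices in the computational basis *)
Definition op (C : numClosedFieldType) (T : finType) := T -> T -> C.

Definition density (C : numClosedFieldType) (T : finType) (M : op C T) : Prop :=
  (forall v : T -> C, 0 <= \sum_(a : T) \sum_(b : T) (v a)^* * M a b * v b)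
  /\ \sum_(a : T) M a a = 1.

Definition restr (n : nat) (d : 'I_n -> nat) (X : {set 'I_n})
  (a : cfg d [set: 'I_n]) : cfg d X :=
  [ffun i : {i : 'I_n | i \in X} => a (exist _ (val i) (in_setT (val i)))].

Definition is_partition (n : nat) (P : {set {set 'I_n}}) : Prop :=
  partition P [set: 'I_n].

Definition finer (n : nat) (P Q : {set {set 'I_n}}) : Prop :=
  forall A, A \in P -> exists2 B, B \in Q & A \subset B.

(* D_{xi-unc}: states of the form tensor_{X in xi} rho_X *)
Definition unc_part (C : numClosedFieldType) (n : nat) (d : 'I_n -> nat)
  (P : {set {set 'I_n}}) (rho : op C (cfg d [set: 'I_n])) : Prop :=
  density rho /\
  exists rhoX : forall X : {set 'I_n}, op C (cfg d X),
    (forall X, X \in P -> density (rhoX X)) /\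
    forall a b, rho a b = \prod_(X in P) rhoX X (restr X a) (restr X b).

(* P_II: nonempty down-sets of partitions *)
Definition is_PII (n : nat) (U : {set {set {set 'I_n}}}) : Prop :=
  (exists P, P \in U) /\
  (forall P, P \in U -> is_partition P) /\
  (forall P Q, Q \in U -> is_partition P -> finer P Q -> P \in U).

(* D_{U-unc} = union over xi in U of D_{xi-unc} *)
Definition unc_set (C : numClosedFieldType) (n : nat) (d : 'I_n -> nat)
  (U : {set {set {set 'I_n}}}) (rho : op C (cfg d [set: 'I_n])) : Prop :=
  exists2 P, P \in U & unc_part P rho.

(* Every partition P is realised by the product state over its blocks of
   classical GHZ mixtures (1/2)(|0..0><0..0| + |1..1><1..1|). If this state
   factorises along another partition Q, then P refines Q: a block B of P
   meeting two blocks of Q would allow a basis vector, all ones on one Q-block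
   and all zeros elsewhere, whose diagonal weight vanishes for the P-product
   (its restriction to B is mixed) but not for the Q-product (each Q-factor is
   nonzero on the all-zeros and all-ones vectors). Down-closure then finishes. *)

From HB Require Import structures.
From mathcomp Require Import all_boot all_order all_algebra.
Set Implicit Arguments. Unset Strict Implicit. Unset Printing Implicit Defensive.
Import Order.TTheory GRing.Theory Num.Theory.
Local Open Scope ring_scope.

Lemma density_ext (C : numClosedFieldType) (T : finType) (M N : op C T) :
  (forall a b, M a b = N a b) -> density N -> density M.
Proof.
move=> eMN [N_psd N_tr]; split.
  move=> v; have := N_psd v; congr (_ <= _); apply: eq_bigr => a _.
  by apply: eq_bigr => b _; rewrite eMN.
by rewrite -N_tr; apply: eq_bigr => a _; rewrite eMN.
Qed.

Lemma diag_density (C : numClosedFieldType) (T : finType) (p : T -> C) :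
  (forall a, 0 <= p a) -> \sum_a p a = 1 ->
  density (fun a b => (a == b)%:R * p a).
Proof.
move=> p_ge0 p_sum1; split; last first.
  by rewrite -[RHS]p_sum1; apply: eq_bigr => a _; rewrite eqxx mul1r.
move=> v; apply: sumr_ge0 => a _.
rewrite (bigD1 a) //= big1 ?addr0 => [|b nba]; last first.
  by rewrite eq_sym (negbTE nba) mul0r mulr0 mul0r.
by rewrite eqxx mul1r mulrAC mulrC mulr_ge0 // mulrC mul_conjC_ge0.
Qed.

Lemma sum_eq_indicator (R : pzSemiRingType) (T : finType) (t : T) :
  \sum_(x : T) (x == t)%:R = 1 :> R.
Proof. by rewrite (bigD1 t) //= eqxx big1 ?addr0 // => x /negbTE->. Qed.

Lemma half_add_half (R : numFieldType) : 2^-1 + 2^-1 = 1 :> R.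
Proof. by rewrite [RHS](splitr 1) mul1r. Qed.

Section ProductStates.
Variables (C : numClosedFieldType) (n : nat) (d : 'I_n -> nat).
Hypothesis d_gt1 : forall i, (1 < d i)%N.

Definition bit (i : 'I_n) (c : bool) : 'I_(d i) :=
  Ordinal (leq_ltn_trans (leq_b1 c) (d_gt1 i)).

Lemma bit_inj i : injective (bit i).
Proof. by move=> [] [] /(congr1 val). Qed.

Definition const_cfg (X : {set 'I_n}) (c : bool) : cfg d X :=
  [ffun k => bit (val k) c].

Definition glue (P : {set {set 'I_n}}) (f : {set 'I_n} -> bool) : cfg d [set: 'I_n] :=
  [ffun k => bit (val k) (f (pblock P (val k)))].

Lemma restr_glue P f B : is_partition P -> B \in P ->
  restr B (glue P f) = const_cfg B (f B).
Proof.
move=> /and3P[_ triP _] PB; apply/ffunP => k.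
by rewrite !ffunE /= (def_pblock triP PB (valP k)).
Qed.

Lemma glue_const P c : glue P (fun=> c) = const_cfg [set: 'I_n] c.
Proof. by apply/ffunP => k; rewrite !ffunE. Qed.

Lemma restr_const B c : restr B (const_cfg [set: 'I_n] c) = const_cfg B c.
Proof. by apply/ffunP => k; rewrite !ffunE. Qed.

Lemma prod_restr_eq P (a b : cfg d [set: 'I_n]) : is_partition P ->
  \prod_(B in P) ((restr B a == restr B b)%:R : C) = (a == b)%:R.
Proof.
move=> /and3P[/eqP covP _ _].
have [<-|nab] := eqVneq a b; first by apply: big1 => B _; rewrite eqxx.
have [k nk] : exists k, a (exist _ k (in_setT k)) != b (exist _ k (in_setT k)).
  apply/existsP; apply: contraNT nab => /existsPn ab; apply/eqP/ffunP => s.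
  have -> : s = exist _ (val s) (in_setT (val s)) by apply: val_inj.
  exact/eqP/negbNE/ab.
have kB : k \in pblock P k by rewrite mem_pblock covP in_setT.
rewrite (bigD1 (pblock P k)) ?pblock_mem ?covP ?in_setT //=.
suff /negbTE-> : restr (pblock P k) a != restr (pblock P k) b by rewrite mul0r.
by apply: contraNneq nk => /ffunP/(_ (exist _ k kB)); rewrite !ffunE => ->.
Qed.

Definition ghz_weight (X : {set 'I_n}) (x : cfg d X) : C :=
  \sum_(c : bool) 2^-1 * (x == const_cfg X c)%:R.

Definition ghz_state (X : {set 'I_n}) : op C (cfg d X) :=
  fun x y => (x == y)%:R * ghz_weight x.

Lemma ghz_weight_ge0 X (x : cfg d X) : 0 <= ghz_weight x.
Proof. by apply: sumr_ge0 => c _; rewrite mulr_ge0 ?invr_ge0 ?ler0n. Qed.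

Lemma ghz_weight_sum X : \sum_(x : cfg d X) ghz_weight x = 1.
Proof.
rewrite exchange_big /= -[RHS]half_add_half big_bool /=.
by rewrite -!big_distrr /= !sum_eq_indicator !mulr1.
Qed.

Lemma ghz_density X : density (@ghz_state X).
Proof. exact: diag_density (@ghz_weight_ge0 X) (ghz_weight_sum X). Qed.

Lemma ghz_weight_const X c : 0 < ghz_weight (const_cfg X c).
Proof.
rewrite /ghz_weight (bigD1 c) //= eqxx mulr1.
by rewrite ltr_pwDl ?invr_gt0 ?ltr0n // sumr_ge0 // => c' _; rewrite mulr_ge0 ?invr_ge0 ?ler0n.
Qed.

Lemma ghz_weight_mixed B (x : cfg d B) i j (iB : i \in B) (jB : j \in B) :
  x (exist _ i iB) = bit i true -> x (exist _ j jB) = bit j false ->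
  ghz_weight x = 0.
Proof.
move=> xi xj; apply: big1 => -[] _; apply/eqP; rewrite mulf_eq0 pnatr_eq0 eqb0.
  by apply/orP; right; apply/eqP => xT; move: xj; rewrite xT ffunE => /bit_inj.
by apply/orP; right; apply/eqP => xF; move: xi; rewrite xF ffunE => /bit_inj.
Qed.

Definition prod_state (P : {set {set 'I_n}}) : op C (cfg d [set: 'I_n]) :=
  fun a b => \prod_(B in P) ghz_state (restr B a) (restr B b).

Lemma prod_state_diag P a b : is_partition P ->
  prod_state P a b = (a == b)%:R * \prod_(B in P) ghz_weight (restr B a).
Proof. by move=> partP; rewrite /prod_state big_split /= prod_restr_eq. Qed.

Lemma prod_state_trace P : is_partition P ->
  \sum_a \prod_(B in P) ghz_weight (restr B a) = 1.
Proof.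
(* Expanding the product over blocks gives one term per bit assignment f to the
   blocks, and that term is supported on the single basis vector [glue P f]. *)
move=> partP.
under eq_bigr => a _ do rewrite (big_distr_big false) /=.
rewrite exchange_big /=.
transitivity (\prod_(B in P) \sum_(c : bool) (2^-1 : C)); last first.
  by apply: big1 => B _; rewrite big_bool /= half_add_half.
rewrite [RHS](big_distr_big false (mem P) predT (fun _ _ => 2^-1)) /=.
apply: eq_bigr => f _.
under eq_bigr => a _ do rewrite big_split /=.
rewrite -big_distrr /= -[RHS]mulr1; congr (_ * _).
rewrite -[RHS](sum_eq_indicator _ (glue P f)); apply: eq_bigr => a _.
rewrite -[RHS](prod_restr_eq _ _ partP); apply: eq_bigr => B PB.
by rewrite restr_glue.
Qed.

Lemma prod_state_density P : is_partition P -> density (prod_state P).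
Proof.
move=> partP; apply: density_ext (fun a b => prod_state_diag a b partP) _.
apply: diag_density; last exact: prod_state_trace.
by move=> a; apply: prodr_ge0 => B _; apply: ghz_weight_ge0.
Qed.

Lemma prod_state_unc P : is_partition P -> unc_part P (prod_state P).
Proof.
move=> partP; split; first exact: prod_state_density.
by exists ghz_state; split=> // X _; apply: ghz_density.
Qed.

Lemma finer_of_unc_prod_state P Q : is_partition P -> is_partition Q ->
  unc_part Q (prod_state P) -> finer P Q.
Proof.
move=> partP partQ [_ [rhoQ [_ rhoQ_prod]]] B PB.
have /and3P[/eqP covQ _ _] := partQ.
have /and3P[_ _ P_nz] := partP.
have [i iB] : exists i, i \in B.
  by apply/set0Pn; apply: contraNneq P_nz => <-.
set Y := pblock Q i.
have QY : Y \in Q by rewrite pblock_mem ?covQ ?in_setT.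
have [BY|/subsetPn[j jB jY]] := boolP (B \subset Y); first by exists Y.
have rhoQ_glue g : prod_state P (glue Q g) (glue Q g) =
    \prod_(Z in Q) rhoQ Z (const_cfg Z (g Z)) (const_cfg Z (g Z)).
  by rewrite rhoQ_prod; apply: eq_bigr => Z QZ; rewrite restr_glue.
have rhoQ_const_neq0 Z c : Z \in Q -> rhoQ Z (const_cfg Z c) (const_cfg Z c) != 0.
  move=> QZ; have : prod_state P (glue Q (fun=> c)) (glue Q (fun=> c)) != 0.
    rewrite prod_state_diag // eqxx mul1r glue_const; apply/prodf_neq0 => B' _.
    by rewrite restr_const gt_eqF ?ghz_weight_const.
  by rewrite rhoQ_glue => /prodf_neq0/(_ Z QZ).
have jY' : pblock Q j != Y.
  by apply: contraNneq jY => <-; rewrite mem_pblock covQ in_setT.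
have : prod_state P (glue Q (pred1 Y)) (glue Q (pred1 Y)) != 0.
  by rewrite rhoQ_glue; apply/prodf_neq0 => Z QZ; apply: rhoQ_const_neq0.
rewrite prod_state_diag // eqxx mul1r (bigD1 B) //=.
rewrite (ghz_weight_mixed (iB := iB) (jB := jB)).
- by rewrite mul0r eqxx.
- by rewrite !ffunE /= eqxx.
by rewrite !ffunE /= (negbTE jY').
Qed.

End ProductStates.

Theorem mainTheorem17 (C : numClosedFieldType) (n : nat) (hn : (0 < n)%N)
  (d : 'I_n -> nat) (hd : forall i, (1 < d i)%N)
  (U X : {set {set {set 'I_n}}}) :
  is_PII U -> is_PII X ->
  (U \subset X <->
   (forall rho : op C (cfg d [set: 'I_n]), unc_set U rho -> unc_set X rho)).
Proof.
move=> [_ [partU _]] [_ [partX downX]]; split.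
  by move=> UX rho [P PU uncP]; exists P => //; apply: (subsetP UX).
move=> uncUX; apply/subsetP => P PU.
have partP := partU P PU.
have [Q QX uncQ] := uncUX _ (ex_intro2 _ _ P PU (prod_state_unc C hd partP)).
exact: downX QX partP (finer_of_unc_prod_state partP (partX Q QX) uncQ).
Qed.
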